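(* Let $A\subseteq B$ be a ring extension (commutative rings with identity) such that every finitely generated $B$-regular ideal of $A$ is $B$-invertible (i.e. $A$ is almost Prüfer in $B$). Then the following conditions are equivalent: (i) every $B$-regular and locally principal ideal of $A$ is $B$-invertible; (ii) the extension $A\subseteq B$ has the finite character, i.e. every $B$-regular ideal of $A$ is contained in only finitely many maximal ideals of $A$.
   Context: For an $A$-submodule $S$ of $B$: $S$ is $B$-regular if $SB=B$; $S$ is $B$-invertible if there is an $A$-submodule $U$ of $B$ with $SU=A$. An ideal $\mathfrak a$ of $A$ is locally principal if $\mathfrak aA_{\mathfrak m}$ is principal for every maximal ideal $\mathfrak m$ of $A$. *)

From HB Require Import structures.
From mathcomp Require Import all_boot all_order all_algebra.
From mathcomp Require Import boolp classical_sets cardinality.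
Set Implicit Arguments. Unset Strict Implicit. Unset Printing Implicit Defensive.
Import GRing.Theory.
Local Open Scope ring_scope.
Local Open Scope classical_set_scope.

Definition is_subring (B : comPzRingType) (A : set B) : Prop :=
  A 1 /\ (forall x y, A x -> A y -> A (x - y)) /\ (forall x y, A x -> A y -> A (x * y)).

Definition Asubmod (B : comPzRingType) (A : set B) (S : set B) : Prop :=
  S 0 /\ (forall x y, S x -> S y -> S (x + y)) /\
  (forall a x, A a -> S x -> S (a * x)).

Definition ideal (B : comPzRingType) (A : set B) (I : set B) : Prop :=
  Asubmod A I /\ I `<=` A.

Definition prodmod (B : comPzRingType) (S U : set B) : set B :=
  [set z | exists n (s u : 'I_n -> B),
     (forall i, S (s i) /\ U (u i)) /\ z = \sum_(i < n) s i * u i].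

Definition Bregular (B : comPzRingType) (S : set B) : Prop :=
  prodmod S [set: B] = [set: B].

Definition Binvertible (B : comPzRingType) (A : set B) (S : set B) : Prop :=
  exists U : set B, Asubmod A U /\ prodmod S U = A.

Definition maximal_ideal (B : comPzRingType) (A : set B) (m : set B) : Prop :=
  ideal A m /\ ~ m 1 /\
  (forall J, ideal A J -> m `<=` J -> ~ J 1 -> J = m).

Definition fin_gen (B : comPzRingType) (A : set B) (I : set B) : Prop :=
  exists n (g : 'I_n -> B), (forall i, A (g i)) /\
    I = [set z | exists c : 'I_n -> B,
                   (forall i, A (c i)) /\ z = \sum_(i < n) c i * g i].

(* I A_m is principal: unfolding of the localization, I A_m = (a/1) A_m for
   some a in I, i.e. every x in I satisfies x/1 = (r/s)(a/1) in A_m. *)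
Definition principal_at (B : comPzRingType) (A : set B) (I m : set B) : Prop :=
  exists a, I a /\
    forall x, I x -> exists s r, [/\ A s, ~ m s, A r & s * x = r * a].

Definition locally_principal (B : comPzRingType) (A : set B) (I : set B) : Prop :=
  forall m, maximal_ideal A m -> principal_at A I m.

Definition almost_Prufer (B : comPzRingType) (A : set B) : Prop :=
  forall I, ideal A I -> fin_gen A I -> Bregular I -> Binvertible A I.

Definition finite_character (B : comPzRingType) (A : set B) : Prop :=
  forall I, ideal A I -> Bregular I ->
    finite_set [set m | maximal_ideal A m /\ I `<=` m].

(* (ii) -> (i): a B-regular ideal I contains a finitely generated B-regular
   ideal J, which lies in only finitely many maximal ideals.  Adding to J a
   local generator of I at each of them gives a finitely generated ideal that
   agrees with I at every maximal ideal, hence equals I, and it is invertible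
   because A is almost Pruefer.

   (i) -> (ii): let a finitely generated B-regular (hence invertible) ideal J
   lie in infinitely many maximal ideals.  Separating two of them by a
   comaximal pair, one builds finitely generated ideals P_0 = A and
   P_(n+1) = P_n Q_n, where Q_n contains J, is proper and comaximal with P_n,
   and infinitely many maximal ideals over J still do not contain P_(n+1).
   The ideals K_n = J + P_n are invertible and decrease, but stabilise at each
   maximal ideal, so the increasing union of the colons (J :_A K_n) is
   B-regular and locally principal.  By (i) it is invertible, hence equal to
   some (J :_A K_N); cancelling J gives K_N <= K_(N+1) <= Q_N, so P_N <= Q_N,
   which is impossible for a proper Q_N comaximal with P_N. *)

From HB Require Import structures.
From mathcomp Require Import all_boot all_order all_algebra.
From mathcomp Require Import boolp classical_sets cardinality.
From mathcomp Require Import ring.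
Set Implicit Arguments. Unset Strict Implicit. Unset Printing Implicit Defensive.
Import GRing.Theory.
Local Open Scope ring_scope.
Local Open Scope classical_set_scope.

Definition colon (B : comPzRingType) (S T : set B) : set B :=
  [set b | forall t, T t -> S (b * t)].

Definition comaximal (B : comPzRingType) (S T : set B) : Prop :=
  exists s t, [/\ S s, T t & s + t = 1].

Definition prodseq (B : comPzRingType) (s t : seq B) : seq B :=
  [seq a * b | a <- s, b <- t].

Lemma decr_chain_sub (T : Type) (F : nat -> set T) :
  (forall n, F n.+1 `<=` F n) -> forall n n', (n <= n')%N -> F n' `<=` F n.
Proof.
move=> Fsucc n n' /subnKC <-; elim: (n' - n)%N => [|d IH]; first by rewrite addn0.
by rewrite addnS; apply: subset_trans (Fsucc _) IH.
Qed.

Section Submodules.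
Variables (B : comPzRingType) (A : set B).
Implicit Types (S T : set B) (s : seq B).

Lemma submod0 S : Asubmod A S -> S 0.
Proof. by case. Qed.

Lemma submodD S x y : Asubmod A S -> S x -> S y -> S (x + y).
Proof. by case=> _ [+ _]; apply. Qed.

Lemma submodMl S a x : Asubmod A S -> A a -> S x -> S (a * x).
Proof. by case=> _ [_]; apply. Qed.

Lemma submodMr S a x : Asubmod A S -> A a -> S x -> S (x * a).
Proof. by rewrite mulrC; apply: submodMl. Qed.

Lemma submod_sum S n (F : 'I_n -> B) :
  Asubmod A S -> (forall i, S (F i)) -> S (\sum_(i < n) F i).
Proof.
move=> hS SF; elim/big_ind: _ => //; first exact: submod0 hS.
by move=> x y; apply: submodD.
Qed.

Lemma sum_notin_submod S n (F : 'I_n -> B) :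
  Asubmod A S -> ~ S (\sum_(i < n) F i) -> exists i, ~ S (F i).
Proof.
move=> hS Ssum; apply: contrapT => /forallNP SF; apply: Ssum.
by apply: (submod_sum hS) => i; apply: contrapT; apply: SF.
Qed.

Lemma submod_colon S T : Asubmod A S -> Asubmod A (colon S T).
Proof.
move=> hS; split; first by move=> t _; rewrite mul0r; apply: submod0 hS.
split=> [x y Sx Sy t Tt | a x Aa Sx t Tt].
  by rewrite mulrDl; apply: submodD hS (Sx t Tt) (Sy t Tt).
by rewrite -mulrA; apply: submodMl hS Aa (Sx t Tt).
Qed.

Lemma submodI S T : Asubmod A S -> Asubmod A T -> Asubmod A (S `&` T).
Proof.
move=> hS hT; split; first by split; [apply: submod0 hS | apply: submod0 hT].
split=> [x y [Sx Tx] [Sy Ty] | a x Aa [Sx Tx]].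
  by split; [apply: submodD hS Sx Sy | apply: submodD hT Tx Ty].
by split; [apply: submodMl hS Aa Sx | apply: submodMl hT Aa Tx].
Qed.

Definition Aspan s : set B :=
  [set z | exists c : 'I_(size s) -> B,
     (forall i, A (c i)) /\ z = \sum_(i < size s) c i * s`_i].

Lemma Aspan_min S s : Asubmod A S -> [set` s] `<=` S -> Aspan s `<=` S.
Proof.
move=> hS sS _ [c [Ac ->]]; apply: (submod_sum hS) => i.
by apply: (submodMl hS (Ac i)); apply/sS/mem_nth.
Qed.

Lemma Aspan_fin_gen s : [set` s] `<=` A -> fin_gen A (Aspan s).
Proof. by move=> sA; exists (size s), (fun i => s`_i); split=> // i; apply/sA/mem_nth. Qed.

Lemma colon_Aspan S s x :
  Asubmod A S -> (forall g, g \in s -> S (x * g)) -> colon S (Aspan s) x.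
Proof.
move=> hS Sxs _ [c [Ac ->]]; rewrite mulr_sumr; apply: (submod_sum hS) => i.
by rewrite mulrCA; apply: (submodMl hS (Ac i)); apply/Sxs/mem_nth.
Qed.

Lemma BregularP S : Bregular S <-> prodmod S [set: B] 1.
Proof.
split=> [-> // | [n [x [b [Sx e1]]]]]; apply/seteqP; split=> // z _.
exists n, x, (fun i => b i * z); split=> [i|]; first by split=> //; case: (Sx i).
by rewrite -{1}[z]mul1r e1 mulr_suml; apply: eq_bigr => i _; rewrite mulrA.
Qed.

Lemma Bregular_sub S T : S `<=` T -> Bregular S -> Bregular T.
Proof.
move=> ST /BregularP [n [x [b [Sx e1]]]]; apply/BregularP; exists n, x, b.
by split=> // i; have [/ST Tx _] := Sx i.
Qed.

Lemma bigcup_total_submod (I : Type) (D : set I) (F : I -> set B) i0 :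
  D i0 -> (forall i, D i -> Asubmod A (F i)) ->
  (forall i j, D i -> D j -> F i `<=` F j \/ F j `<=` F i) ->
  Asubmod A (\bigcup_(i in D) F i).
Proof.
move=> Di0 hF tot; split; first by exists i0 => //; apply: submod0 (hF _ Di0).
split=> [x y [i Di Fx] [j Dj Fy] | a x Aa [i Di Fx]]; last first.
  by exists i => //; apply: submodMl (hF _ Di) Aa Fx.
have [Fij|Fji] := tot i j Di Dj.
  by exists j => //; apply: submodD (hF _ Dj) (Fij _ Fx) Fy.
by exists i => //; apply: submodD (hF _ Di) Fx (Fji _ Fy).
Qed.

Lemma exists_maximal C : ideal A C -> ~ C 1 -> exists m, maximal_ideal A m /\ C `<=` m.
Proof.
move=> hC C1; pose proper_over X := [/\ ideal A X, C `<=` X & ~ X 1].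
pose T := {X : set B | proper_over X}.
have [||| F totF | [M [hM CM M1]] maxM] := @Zorn T (fun X Y => `[< sval X `<=` sval Y >]).
- by move=> X; apply/asboolP.
- by move=> X Y Z /asboolP XY /asboolP YZ; apply/asboolP; apply: subset_trans YZ.
- by move=> [X ?] [Y ?] /asboolP XY /asboolP YX; apply/eq_exist/seteqP.
- have [[X0 FX0]|F0] := pselect (F !=set0); last first.
    exists (exist _ C (And3 hC (@subset_refl _ C) C1)) => X FX.
    by case: F0; exists X.
  pose U := \bigcup_(X in F) sval X.
  have hU : ideal A U.
    split=> [|x [X _]]; last by case: (svalP X) => hX _ _; apply: hX.2.
    apply: (bigcup_total_submod FX0) => [X _ | X Y FX FY].
      by case: (svalP X) => hX _ _; apply: hX.1.
    by have [/asboolP|/asboolP] := totF X Y FX FY; [left | right].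
  have UT : proper_over U.
    split=> // [x Cx | [X _]]; first by exists X0 => //; case: (svalP X0) => _ + _; apply.
    by case: (svalP X) => _ _.
  by exists (exist _ U UT) => X FX; apply/asboolP => x Xx; exists X.
exists M; split=> //; split=> //; split=> // J hJ MJ J1.
have PJ : proper_over J by split=> //; apply: subset_trans MJ.
by have /(congr1 sval) := maxM (exist _ J PJ) (asboolT MJ).
Qed.

Lemma colon_mul J K x y :
  Asubmod A J -> J `<=` K -> J x -> colon A K y -> (A `&` colon J K) (x * y).
Proof.
move=> hJ JK Jx Ky; split=> [|k Kk]; first by rewrite mulrC; apply: Ky; apply: JK.
by rewrite -mulrA; apply: submodMr hJ (Ky k Kk) Jx.
Qed.

Lemma invertible_bigcup_sub (L : nat -> set B) :
  (forall n, Asubmod A (L n)) -> (forall n n', (n <= n')%N -> L n `<=` L n') ->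
  prodmod (\bigcup_n L n) (colon A (\bigcup_n L n)) 1 -> exists N, \bigcup_n L n `<=` L N.
Proof.
move=> hL Lmono [k [s [u [Lsu e1]]]].
have /choice [idx Ls] : forall i, exists n, L n (s i).
  by move=> i; have [[n _ Lns] _] := Lsu i; exists n.
exists (\max_(i < k) idx i)%N => x Lx; rewrite -[x]mul1r e1 mulr_suml.
apply: (submod_sum (hL _)) => i; rewrite -mulrA.
apply: (submodMr (hL _)); first exact: (Lsu i).2.
exact: Lmono (leq_bigmax i) _ (Ls i).
Qed.

End Submodules.

Section Subring.
Variables (B : comPzRingType) (A : set B).
Hypothesis subringA : is_subring A.
Implicit Types (I S : set B) (s t : seq B).

Lemma subring1 : A 1.
Proof. by case: subringA. Qed.

Lemma subringB x y : A x -> A y -> A (x - y).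
Proof. by case: subringA => _ [+ _]; apply. Qed.

Lemma subringM x y : A x -> A y -> A (x * y).
Proof. by case: subringA => _ [_]; apply. Qed.

Lemma subring0 : A 0.
Proof. by rewrite -(subrr 1); apply: subringB; apply: subring1. Qed.

Lemma subringD x y : A x -> A y -> A (x + y).
Proof.
move=> Ax Ay; have -> : x + y = x - (0 - y) by rewrite sub0r opprK.
by apply: subringB Ax (subringB subring0 Ay).
Qed.

Lemma subring_sum n (F : 'I_n -> B) : (forall i, A (F i)) -> A (\sum_(i < n) F i).
Proof. by move=> AF; elim/big_ind: _ => //; [apply: subring0 | apply: subringD]. Qed.

Lemma subring_submod : Asubmod A A.
Proof. by split; [apply: subring0 | split; [apply: subringD | apply: subringM]]. Qed.

Lemma Aspan_submod s : Asubmod A (Aspan A s).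
Proof.
split.
  exists (fun _ => 0); split=> [_|]; first exact: subring0.
  by rewrite big1 // => i _; rewrite mul0r.
split=> [_ _ [c [Ac ->]] [c' [Ac' ->]] | a _ Aa [c [Ac ->]]].
  exists (fun i => c i + c' i); split=> [i|]; first exact: subringD.
  by rewrite -big_split; apply: eq_bigr => i _; rewrite mulrDl.
exists (fun i => a * c i); split=> [i|]; first exact: subringM.
by rewrite mulr_sumr; apply: eq_bigr => i _; rewrite mulrA.
Qed.

Lemma Aspan_gen s g : g \in s -> Aspan A s g.
Proof.
move=> sg; have gk : (index g s < size s)%N by rewrite index_mem.
pose k := Ordinal gk; exists (fun i => if i == k then 1 else 0).
split=> [i|]; first by case: ifP => _; [apply: subring1 | apply: subring0].
rewrite (bigD1 k) //= eqxx mul1r nth_index // big1 ?addr0 // => i /negbTE ->.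
by rewrite mul0r.
Qed.

Lemma Aspan_subset s t : {subset s <= t} -> Aspan A s `<=` Aspan A t.
Proof. by move=> st; apply: Aspan_min (Aspan_submod t) _ => g /st /Aspan_gen. Qed.

Lemma Aspan_ideal s : [set` s] `<=` A -> ideal A (Aspan A s).
Proof. by move=> sA; split; [apply: Aspan_submod | apply: Aspan_min subring_submod sA]. Qed.

Lemma Aspan_prodseq s t x y :
  Aspan A s x -> Aspan A t y -> Aspan A (prodseq s t) (x * y).
Proof.
move=> sx ty; have hst := Aspan_submod (prodseq s t).
have tcol a : a \in s -> colon (Aspan A (prodseq s t)) (Aspan A t) a.
  by move=> sa; apply: (colon_Aspan hst) => b tb; apply/Aspan_gen/allpairs_f.
by rewrite mulrC; apply: (colon_Aspan hst) sx => a sa; rewrite mulrC; apply: tcol.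
Qed.

Lemma prodseq_subring s t :
  [set` s] `<=` A -> [set` t] `<=` A -> [set` prodseq s t] `<=` A.
Proof. by move=> sA tA _ /allpairsP [[a b] [/= /sA Aa /tA Ab ->]]; apply: subringM. Qed.

Lemma BinvertibleP I : ideal A I -> Binvertible A I <-> prodmod I (colon A I) 1.
Proof.
move=> hI; split=> [[U [hU IU]] | invI].
  have : prodmod I U 1 by rewrite IU; apply: subring1.
  move=> [n [s [u [Isu ->]]]]; exists n, s, u; split=> // i.
  have [Is Uu] := Isu i; split=> // x Ix; rewrite -IU.
  by exists 1%N, (fun _ => x), (fun _ => u i); rewrite big_ord1 mulrC.
exists (colon A I); split; first exact: submod_colon subring_submod.
apply/seteqP; split=> [_ [n [s [u [Isu ->]]]] | a Aa].
  by apply: subring_sum => i; have [Is Au] := Isu i; rewrite mulrC; apply: Au.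
case: invI => n [s [u [Isu e1]]]; exists n, s, (fun i => a * u i); split.
  move=> i; have [Is Au] := Isu i; split=> // x Ix.
  by rewrite -mulrA; apply: subringM Aa (Au x Ix).
by rewrite -{1}[a]mulr1 e1 mulr_sumr; apply: eq_bigr => i _; rewrite mulrCA.
Qed.

Lemma Bregular_fin_sub I :
  ideal A I -> Bregular I -> exists s, [set` s] `<=` I /\ Bregular (Aspan A s).
Proof.
move=> hI /BregularP [n [x [b [Ix e1]]]]; exists (codom x); split.
  by move=> _ /codomP [i ->]; case: (Ix i).
by apply/BregularP; exists n, x, b; split=> // i; split=> //; apply/Aspan_gen/codom_f.
Qed.

Lemma maximal_comax m x :
  maximal_ideal A m -> A x -> ~ m x -> exists r y, [/\ A r, m y & y + r * x = 1].
Proof.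
move=> [hm [_ maxm]] Ax mx; have msub := hm.1.
pose M := [set z | exists r y, [/\ A r, m y & z = y + r * x]].
have hM : ideal A M.
  split=> [|_ [r [y [Ar my ->]]]]; last exact: subringD (hm.2 _ my) (subringM Ar Ax).
  split.
    by exists 0, 0; rewrite mul0r addr0; split=> //; [apply: subring0 | apply: submod0 msub].
  split=> [_ _ [r [y [Ar my ->]]] [r' [y' [Ar' my' ->]]] | a _ Aa [r [y [Ar my ->]]]].
    exists (r + r'), (y + y'); split; [exact: subringD | exact: submodD msub my my' |].
    by rewrite mulrDl addrACA.
  exists (a * r), (a * y); split; [exact: subringM | exact: submodMl msub Aa my |].
  by rewrite mulrDr mulrA.
apply: contrapT => noM1.
have M1 : ~ M 1 by move=> [r [y [Ar my e]]]; apply: noM1; exists r, y.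
have mM : m `<=` M by move=> y my; exists 0, y; rewrite mul0r addr0; split=> //; apply: subring0.
apply: mx; rewrite -(maxm M hM mM M1).
by exists 1, 0; rewrite mul1r add0r; split=> //; [apply: subring1 | apply: submod0 msub].
Qed.

Lemma maximal_prime m x y :
  maximal_ideal A m -> A x -> A y -> ~ m x -> ~ m y -> ~ m (x * y).
Proof.
move=> hm Ax Ay mx my mxy; have [r [t [Ar mt e1]]] := maximal_comax hm Ax mx.
apply: my; rewrite -[y]mul1r -e1 mulrDl -mulrA.
exact: submodD hm.1.1 (submodMr hm.1.1 Ay mt) (submodMl hm.1.1 Ar mxy).
Qed.

Lemma maximal_neq_comax m1 m2 :
  maximal_ideal A m1 -> maximal_ideal A m2 -> m1 <> m2 -> comaximal m1 m2.
Proof.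
move=> hm1 hm2 m12; have [v [m2v m1v]] : (m2 `&` ~` m1) !=set0.
  apply: nonsubset => m21; apply: m12; case: hm2 => _ [_ max2].
  exact: max2 m1 hm1.1 m21 hm1.2.1.
have [r [y [Ar m1y e1]]] := maximal_comax hm1 (hm2.1.2 _ m2v) m1v.
by exists y, (r * v); split=> //; apply: submodMl hm2.1.1 Ar m2v.
Qed.

Lemma mem_of_local S (z : B) :
  ideal A S -> (forall m, maximal_ideal A m -> exists c, [/\ A c, ~ m c & S (c * z)]) -> S z.
Proof.
move=> hS loc; pose C := [set c | A c /\ S (c * z)].
have hC : ideal A C.
  split=> [|c []] //; split.
    by split; [apply: subring0 | rewrite mul0r; apply: submod0 hS.1].
  split=> [c c' [Ac Scz] [Ac' Sc'z] | a c Aa [Ac Scz]].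
    by split; [apply: subringD | rewrite mulrDl; apply: submodD hS.1 Scz Sc'z].
  by split; [apply: subringM | rewrite -mulrA; apply: submodMl hS.1 Aa Scz].
apply: contrapT => Sz; have C1 : ~ C 1 by move=> [_]; rewrite mul1r.
have [m [hm Cm]] := exists_maximal hC C1; have [c [Ac mc Scz]] := loc m hm.
exact: mc (Cm c (conj Ac Scz)).
Qed.

Lemma principal_at_absorb I I' m :
  maximal_ideal A m -> I' `<=` I ->
  (forall x, I x -> exists c, [/\ A c, ~ m c & I' (c * x)]) ->
  principal_at A I' m -> principal_at A I m.
Proof.
move=> hm I'I absorb [a [I'a gena]]; exists a; split=> [|x Ix]; first exact: I'I.
have [c [Ac mc I'cx]] := absorb x Ix; have [d [r [Ad md Ar e]]] := gena _ I'cx.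
exists (d * c), r; split=> //; [exact: subringM | exact: maximal_prime | by rewrite -mulrA].
Qed.

Lemma colon_principal_at J K m :
  maximal_ideal A m -> Asubmod A J -> J `<=` K ->
  prodmod J (colon A J) 1 -> prodmod K (colon A K) 1 ->
  principal_at A (A `&` colon J K) m.
Proof.
move=> hm hJ JK [n [s [u [Jsu e1]]]] [n' [s' [u' [Ksu e1']]]].
have [i msu] : exists i, ~ m (s i * u i).
  by apply: sum_notin_submod hm.1.1 _; rewrite -e1; apply: hm.2.1.
have [j msu'] : exists j, ~ m (s' j * u' j).
  by apply: sum_notin_submod hm.1.1 _; rewrite -e1'; apply: hm.2.1.
have [Js Au] := Jsu i; have [Ks' Au'] := Ksu j.
have Asu : A (s i * u i) by rewrite mulrC; apply: Au.
have Asu' : A (s' j * u' j) by rewrite mulrC; apply: Au'.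
exists (s i * u' j); split=> [|x [Ax Jx]]; first exact: colon_mul.
exists (s i * u i * (s' j * u' j)), (u i * (x * s' j)); split.
- exact: subringM.
- exact: maximal_prime.
- exact/Au/Jx.
- by ring.
Qed.

Lemma sub_of_colon_sub J K K' :
  Asubmod A J -> Asubmod A K' -> J `<=` K' ->
  prodmod J (colon A J) 1 -> prodmod K' (colon A K') 1 ->
  A `&` colon J K' `<=` colon J K -> K `<=` K'.
Proof.
move=> hJ hK' JK' [n [s [u [Jsu e1]]]] [n' [s' [u' [Ksu e1']]]] colJ t Kt.
rewrite -[t]mul1r e1' mulr_suml; apply: (submod_sum hK') => l; rewrite -mulrA.
apply: (submodMr hK') (Ksu l).1; rewrite -[_ * t]mul1r e1 mulr_suml.
apply: subring_sum => i; have [Js Au] := Jsu i.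
have Jst : J (s i * u' l * t) by apply: colJ Kt; apply: colon_mul hJ JK' Js (Ksu l).2.
by have := Au _ Jst; congr A; ring.
Qed.

Lemma invertible_of_finite_character :
  almost_Prufer A -> finite_character A ->
  forall I, ideal A I -> Bregular I -> locally_principal A I -> Binvertible A I.
Proof.
move=> prufA fcA I hI Ireg lpI.
have [gJ [gJI Jreg]] := Bregular_fin_sub hI Ireg.
have gJA : [set` gJ] `<=` A := subset_trans gJI hI.2.
have /choice [gen hgen] : forall m, exists a, maximal_ideal A m -> I a /\
    forall x, I x -> exists c r, [/\ A c, ~ m c, A r & c * x = r * a].
  move=> m; have [/lpI [a ?]|nm] := pselect (maximal_ideal A m); first by exists a.
  by exists 0 => /nm.
have /finite_seqP [ga ega] := finite_image gen (fcA _ (Aspan_ideal gJA) Jreg).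
have gaI : [set` ga] `<=` I by rewrite -ega => _ [m [hm _] <-]; apply: (hgen m hm).1.
have sI : [set` gJ ++ ga] `<=` I by move=> g /=; rewrite mem_cat => /orP [/gJI | /gaI].
have sA : [set` gJ ++ ga] `<=` A := subset_trans sI hI.2.
have Jsub : Aspan A gJ `<=` Aspan A (gJ ++ ga).
  by apply: Aspan_subset => g; rewrite mem_cat => ->.
have IS : I = Aspan A (gJ ++ ga).
  apply/seteqP; split=> [z Iz|]; last exact: Aspan_min hI.1 sI.
  apply: (mem_of_local (Aspan_ideal sA)) => m hm.
  have [Jm|/nonsubset [j [Jj mj]]] := pselect (Aspan A gJ `<=` m).
    have [c [r [Ac mc Ar e]]] := (hgen m hm).2 z Iz; exists c; split=> //; rewrite e.
    have /= gam : [set` ga] (gen m) by rewrite -ega; exists m.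
    by apply: (submodMl (Aspan_submod _) Ar); apply: Aspan_gen; rewrite mem_cat gam orbT.
  exists j; split=> //; first exact: (Aspan_ideal gJA).2.
  by apply: Jsub; rewrite mulrC; apply: submodMl (Aspan_submod _) (hI.2 _ Iz) Jj.
rewrite IS; apply: prufA; [exact: Aspan_ideal | exact: Aspan_fin_gen |].
exact: Bregular_sub Jsub Jreg.
Qed.

End Subring.

Section NonInvertibleIdeal.
Variables (B : comPzRingType) (A : set B).
Hypotheses (subringA : is_subring A) (prufA : almost_Prufer A).
Variable gJ : seq B.
Hypotheses (gJA : [set` gJ] `<=` A) (Jreg : Bregular (Aspan A gJ)).
Hypothesis Jinf : infinite_set [set m | maximal_ideal A m /\ Aspan A gJ `<=` m].
Implicit Types (P Q : seq B) (m : set B).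

Let J := Aspan A gJ.

Let J_ideal : ideal A J.
Proof. exact: (Aspan_ideal subringA gJA). Qed.

Let J_invertible : prodmod J (colon A J) 1.
Proof.
apply/(BinvertibleP subringA J_ideal).
exact: (prufA J_ideal (Aspan_fin_gen gJA) Jreg).
Qed.

Definition VD P := [set m | [/\ maximal_ideal A m, J `<=` m & ~ Aspan A P `<=` m]].

Definition next_factor P Q :=
  [/\ [set` Q] `<=` A, J `<=` Aspan A Q, ~ Aspan A Q 1,
      comaximal (Aspan A Q) (Aspan A P) & infinite_set (VD (prodseq P Q))].

Lemma VD_prodseq P Q m :
  [set` P] `<=` A -> [set` Q] `<=` A -> VD P m -> ~ Aspan A Q `<=` m -> VD (prodseq P Q) m.
Proof.
move=> PA QA [hm Jm /nonsubset [p [Pp mp]]] /nonsubset [q [Qq mq]]; split=> // PQm.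
apply: (maximal_prime subringA hm _ _ mp mq (PQm _ (Aspan_prodseq subringA Pp Qq))).
  exact: (Aspan_ideal subringA PA).2.
exact: (Aspan_ideal subringA QA).2.
Qed.

Lemma exists_factor_in P m w :
  [set` P] `<=` A -> VD P m -> m w ->
  exists Q, [/\ [set` Q] `<=` A, J `<=` Aspan A Q, Aspan A Q `<=` m, Aspan A Q w
              & comaximal (Aspan A Q) (Aspan A P)].
Proof.
move=> PA [hm Jm /nonsubset [p [Pp mp]]] mw.
have [r [y [Ar my e1]]] := maximal_comax subringA hm ((Aspan_ideal subringA PA).2 _ Pp) mp.
have Qm : [set` gJ ++ [:: y; w]] `<=` m.
  move=> g /=; rewrite mem_cat !inE => /orP [gJg|/orP [] /eqP -> //].
  exact/Jm/(Aspan_gen subringA).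
exists (gJ ++ [:: y; w]); split.
- exact: subset_trans Qm hm.1.2.
- by apply: (Aspan_subset subringA) => g; rewrite mem_cat => ->.
- exact: Aspan_min hm.1.1 Qm.
- by apply: (Aspan_gen subringA); rewrite mem_cat !inE eqxx !orbT.
exists y, (r * p); split=> //; last exact: submodMl (Aspan_submod subringA P) Ar Pp.
by apply: (Aspan_gen subringA); rewrite mem_cat !inE eqxx orbT.
Qed.

Lemma exists_next_factor P :
  [set` P] `<=` A -> infinite_set (VD P) -> exists Q, next_factor P Q.
Proof.
move=> PA infP; have [m1 V1] := infinite_setN0 infP.
have [m2 [V2 m21]] := infinite_setN0 (infinite_setD infP (finite_set1 m1)).
have [[hm1 _ _] [hm2 _ _]] := (V1, V2).
have [u [v [m1u m2v uv]]] := maximal_neq_comax subringA hm1 hm2 (fun e => m21 (esym e)).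
have [Q1 [Q1A JQ1 Q1m Q1u coQ1]] := exists_factor_in PA V1 m1u.
have [Q2 [Q2A JQ2 Q2m Q2v coQ2]] := exists_factor_in PA V2 m2v.
have cover : VD P `<=` VD (prodseq P Q1) `|` VD (prodseq P Q2).
  move=> m Vm; have [hm _ _] := Vm.
  have [Q1m'|?] := pselect (Aspan A Q1 `<=` m); last by left; apply: VD_prodseq.
  have [Q2m'|?] := pselect (Aspan A Q2 `<=` m); last by right; apply: VD_prodseq.
  by case: hm.2.1; rewrite -uv; apply: submodD hm.1.1 (Q1m' _ Q1u) (Q2m' _ Q2v).
have [inf1|fin1] := pselect (infinite_set (VD (prodseq P Q1))).
  by exists Q1; split=> // /Q1m; apply: hm1.2.1.
have [inf2|fin2] := pselect (infinite_set (VD (prodseq P Q2))).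
  by exists Q2; split=> // /Q2m; apply: hm2.2.1.
by case: infP; apply: sub_finite_set cover _; rewrite finite_setU; split; apply: contrapT.
Qed.

Definition next_factor_of P := xget [::] (next_factor P).

Fixpoint factor_chain n : seq B :=
  if n is n'.+1 then prodseq (factor_chain n') (next_factor_of (factor_chain n'))
  else [:: 1].

Lemma next_factor_ofP P :
  [set` P] `<=` A -> infinite_set (VD P) -> next_factor P (next_factor_of P).
Proof. by move=> PA infP; apply: xgetPex; apply: exists_next_factor PA infP. Qed.

Lemma factor_chain_spec n :
  [set` factor_chain n] `<=` A /\ infinite_set (VD (factor_chain n)).
Proof.
elim: n => [|n [PA infP]] /=.
  split; first by move=> g /=; rewrite inE => /eqP ->; apply: (subring1 subringA).
  apply: contra_not Jinf; apply: sub_finite_set => m [hm Jm]; split=> // P1.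
  exact/hm.2.1/P1/(Aspan_gen subringA)/mem_head.
have [QA _ _ _ infPQ] := next_factor_ofP PA infP.
by split=> //; apply: (prodseq_subring subringA).
Qed.

Let P n := factor_chain n.
Let Q n := next_factor_of (P n).
Let K n := Aspan A (gJ ++ P n).
Let L n := A `&` colon J (K n).
Let Lcup := \bigcup_n L n.

Let P_A n : [set` P n] `<=` A.
Proof. exact: (factor_chain_spec n).1. Qed.

Let Q_next n : next_factor (P n) (Q n).
Proof. by have [] := factor_chain_spec n; apply: next_factor_ofP. Qed.

Let Q_A n : [set` Q n] `<=` A.
Proof. by have [] := Q_next n. Qed.

Let K_gens n : [set` gJ ++ P n] `<=` A.
Proof. by move=> g /=; rewrite mem_cat => /orP [/gJA | /P_A]. Qed.

Lemma K_ideal n : ideal A (K n).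
Proof. exact: (Aspan_ideal subringA (@K_gens n)). Qed.

Lemma J_sub_K n : J `<=` K n.
Proof. by apply: (Aspan_subset subringA) => g; rewrite mem_cat => ->. Qed.

Lemma P_sub_K n : Aspan A (P n) `<=` K n.
Proof. by apply: (Aspan_subset subringA) => g; rewrite mem_cat => ->; rewrite orbT. Qed.

Lemma K_invertible n : prodmod (K n) (colon A (K n)) 1.
Proof.
apply/(BinvertibleP subringA (K_ideal n)).
exact: (prufA (K_ideal n) (Aspan_fin_gen (@K_gens n)) (Bregular_sub (@J_sub_K n) Jreg)).
Qed.

Lemma P_antitone n n' : (n <= n')%N -> Aspan A (P n') `<=` Aspan A (P n).
Proof.
apply: (@decr_chain_sub _ (fun k => Aspan A (P k))) => k.
apply: Aspan_min (Aspan_submod subringA _) _.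
move=> _ /allpairsP [[a b] [/= Pa Qb ->]]; rewrite mulrC.
exact: submodMl (Aspan_submod subringA _) (Q_A Qb) (Aspan_gen subringA Pa).
Qed.

Lemma K_antitone n n' : (n <= n')%N -> K n' `<=` K n.
Proof.
apply: (@decr_chain_sub _ K) => k; apply: Aspan_min (K_ideal k).1 _ => g /=.
rewrite mem_cat => /orP [gJg|/allpairsP [[a b] [/= Pa Qb ->]]].
  by apply: (Aspan_subset subringA) (Aspan_gen subringA gJg) => h; rewrite mem_cat => ->.
apply: P_sub_K; rewrite mulrC.
exact: submodMl (Aspan_submod subringA _) (Q_A Qb) (Aspan_gen subringA Pa).
Qed.

Lemma L_mono n n' : (n <= n')%N -> L n `<=` L n'.
Proof. by move=> nn' x [Ax Lx]; split=> // k /(K_antitone nn'); apply: Lx. Qed.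

Lemma K_step n q : Aspan A (Q n) q -> colon (K n.+1) (K n) q.
Proof.
move=> Qq; have Aq := (Aspan_ideal subringA (@Q_A n)).2 _ Qq.
apply: colon_Aspan (K_ideal _).1 _ => g; rewrite mem_cat => /orP [gJg|Pg].
  exact/J_sub_K/(submodMl (Aspan_submod subringA _) Aq)/(Aspan_gen subringA gJg).
apply: (Aspan_subset subringA (s := prodseq (P n) (Q n))).
  by move=> h; rewrite mem_cat => ->; rewrite orbT.
by rewrite mulrC; apply: (Aspan_prodseq subringA) Qq; apply: (Aspan_gen subringA).
Qed.

Lemma Q_eventually_notin m :
  maximal_ideal A m -> exists i, forall n, (i <= n)%N -> ~ Aspan A (Q n) `<=` m.
Proof.
move=> hm; have [[i Pim]|nPm] := pselect (exists i, Aspan A (P i) `<=` m).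
  exists i => n ni Qm; have [_ _ _ [y [p [Qy Pp e1]]] _] := Q_next n.
  apply: hm.2.1; rewrite -e1.
  exact: submodD hm.1.1 (Qm _ Qy) (Pim _ (P_antitone ni Pp)).
exists 0%N => n _ Qm; apply: nPm; exists n.+1.
apply: Aspan_min hm.1.1 _ => _ /allpairsP [[a b] [/= Pa Qb ->]].
exact: submodMl hm.1.1 (P_A Pa) (Qm _ (Aspan_gen subringA Qb)).
Qed.

Lemma K_stable m :
  maximal_ideal A m -> exists i, forall n, exists t, [/\ A t, ~ m t & colon (K n) (K i) t].
Proof.
move=> hm; have [i Qm] := Q_eventually_notin hm; exists i.
have early n : (n <= i)%N -> exists t, [/\ A t, ~ m t & colon (K n) (K i) t].
  move=> ni; exists 1; split; [exact: (subring1 subringA) | exact: hm.2.1 |].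
  by move=> k /(K_antitone ni); rewrite mul1r.
elim=> [|n [t [At mt tK]]]; first exact: early.
have [ni|/Qm /nonsubset [q [Qq mq]]] := leqP n.+1 i; first exact: early.
have Aq := (Aspan_ideal subringA (@Q_A n)).2 _ Qq.
exists (q * t); split; [exact: (subringM subringA) | exact: (maximal_prime subringA) |].
by move=> k Kk; rewrite -mulrA; apply: K_step Qq _ (tK k Kk).
Qed.

Lemma L_ideal n : ideal A (L n).
Proof.
split=> [|x []] //.
exact: submodI (subring_submod subringA) (submod_colon _ J_ideal.1).
Qed.

Lemma Lcup_ideal : ideal A Lcup.
Proof.
split=> [|x [n _ []] //]; apply: (bigcup_total_submod (i0 := 0%N)) => // [n _ | n n' _ _].
  exact: (L_ideal n).1.
by have [nn'|/ltnW n'n] := leqP n n'; [left; apply: L_mono | right; apply: L_mono].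
Qed.

Lemma Lcup_Bregular : Bregular Lcup.
Proof.
apply: Bregular_sub Jreg => x Jx; exists 0%N => //; split; first exact: J_ideal.2.
by move=> k K0k; apply: submodMr J_ideal.1 ((K_ideal 0).2 _ K0k) Jx.
Qed.

Lemma Lcup_locally_principal : locally_principal A Lcup.
Proof.
move=> m hm; have [i stable] := K_stable hm.
apply: (principal_at_absorb subringA hm (I' := L i)) => [x Lx | x [n _ [Ax Lx]] |].
- by exists i.
- have [t [At mt tK]] := stable n; exists t; split=> //.
  split=> [|k Kk]; first exact: (subringM subringA).
  by rewrite mulrAC mulrC; apply/Lx/tK.
- apply: (colon_principal_at subringA hm J_ideal.1 (@J_sub_K i) J_invertible).
  exact: K_invertible.
Qed.

Lemma Lcup_not_invertible : ~ Binvertible A Lcup.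
Proof.
move=> /(BinvertibleP subringA Lcup_ideal) invI.
have [N IN] := invertible_bigcup_sub (fun n => (L_ideal n).1) L_mono invI.
have [_ JQ Q1 [y [p [Qy Pp e1]]] _] := Q_next N.
have KK : K N `<=` K N.+1.
  apply: (sub_of_colon_sub subringA J_ideal.1 (K_ideal _).1 (@J_sub_K _) J_invertible).
    exact: K_invertible.
  by move=> x LNx; have [_ colx] : L N x by apply: IN; exists N.+1.
have KQ : K N.+1 `<=` Aspan A (Q N).
  apply: Aspan_min (Aspan_submod subringA _) _ => g /=.
  rewrite mem_cat => /orP [gJg|/allpairsP [[a b] [/= Pa Qb ->]]].
    exact/JQ/(Aspan_gen subringA gJg).
  exact: submodMl (Aspan_submod subringA _) (P_A Pa) (Aspan_gen subringA Qb).
apply: Q1; rewrite -e1; apply: submodD (Aspan_submod subringA _) Qy _.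
exact/KQ/KK/P_sub_K.
Qed.

Lemma exists_locally_principal_not_invertible :
  exists I, [/\ ideal A I, Bregular I, locally_principal A I & ~ Binvertible A I].
Proof.
exists Lcup; split.
- exact: Lcup_ideal.
- exact: Lcup_Bregular.
- exact: Lcup_locally_principal.
- exact: Lcup_not_invertible.
Qed.

End NonInvertibleIdeal.

Lemma finite_character_of_invertible (B : comPzRingType) (A : set B) :
  is_subring A -> almost_Prufer A ->
  (forall I, ideal A I -> Bregular I -> locally_principal A I -> Binvertible A I) ->
  finite_character A.
Proof.
move=> subringA prufA inv I hI Ireg; apply: contrapT => Iinf.
have [gJ [gJI Jreg]] := Bregular_fin_sub subringA hI Ireg.
have Jinf : infinite_set [set m | maximal_ideal A m /\ Aspan A gJ `<=` m].
  apply: contra_not Iinf; apply: sub_finite_set => m [hm Im]; split=> //.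
  exact: subset_trans (Aspan_min hI.1 gJI) Im.
have [I' [hI' I'reg lpI' ninv]] :=
  exists_locally_principal_not_invertible subringA prufA (subset_trans gJI hI.2) Jreg Jinf.
exact: ninv (inv I' hI' I'reg lpI').
Qed.

Theorem theorem4p5 (B : comPzRingType) (A : set B) :
  is_subring A -> almost_Prufer A ->
  ((forall I, ideal A I -> Bregular I -> locally_principal A I -> Binvertible A I)
   <-> finite_character A).
Proof.
move=> subringA prufA; split; first exact: finite_character_of_invertible.
exact: invertible_of_finite_character.
Qed.
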